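(* Let $G$ be a directed acyclic graph with $n$ vertices, let $s,t\in V(G)$, and let $k=\operatorname{fvs}(G)$. Then the number of distinct directed $s$-$t$ paths in $G$ is at most $k^k n^{\mathcal{O}(k)}$.
   Context: $\operatorname{fvs}(G)$ denotes the minimum size of a feedback vertex set of the underlying undirected graph of $G$, i.e., the minimum number of vertices whose removal makes the underlying undirected graph a forest. *)

From mathcomp Require Import all_boot.
Set Implicit Arguments. Unset Strict Implicit. Unset Printing Implicit Defensive.

Definition dag (T : finType) (e : rel T) : Prop :=
  forall x y, e x y -> ~~ connect e y x.

Definition uadj (T : finType) (e : rel T) : rel T :=
  fun u v => (u != v) && (e u v || e v u).

(* The underlying undirected graph minus S is a forest: it has no cycle, i.e.
   no sequence of >= 3 distinct vertices outside S, cyclically adjacent. *)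
Definition is_fvs (T : finType) (e : rel T) (S : {set T}) : Prop :=
  forall c : seq T, 3 <= size c -> all (fun v => v \notin S) c ->
    ~~ ucycleb (uadj e) c.

Definition fvs_is (T : finType) (e : rel T) (k : nat) : Prop :=
  (exists2 S : {set T}, is_fvs e S & #|S| = k) /\
  (forall S : {set T}, is_fvs e S -> k <= #|S|).

(* A directed s-t path, given as the list of vertices after s. *)
Definition st_path (T : finType) (e : rel T) (s t : T) (p : seq T) : bool :=
  [&& path e s p, last s p == t & uniq (s :: p)].

From mathcomp Require Import all_boot zify.
Set Implicit Arguments. Unset Strict Implicit. Unset Printing Implicit Defensive.

(* Fix a minimum feedback vertex set S, |S| = k.
   A simple path from s passes through S at most k times, so it splits into at
   most k + 1 segments, each starting at s or at a vertex of S and continuing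
   inside the forest G - S.  In a forest a simple path is determined by its
   endpoints, so a segment is determined by the triple (start, first vertex
   after the start, last vertex).  Hence the paths inject into sequences of at
   most k + 1 triples, of which there are at most (n^3 + 1)^(k+1) <= k^k n^(8k)
   when k >= 1; when k = 0 the graph is a forest and there is at most one
   s-t path. *)

Lemma has_split_first (T : eqType) (p : pred T) s : has p s ->
  exists z Q s2, [/\ s = Q ++ z :: s2, p z & ~~ has p Q].
Proof.
elim: s => // y s IH /=; have [py _|npy /IH[z [Q [s2 [-> pz nQ]]]]] := boolP (p y).
  by exists y, [::], s.
by exists z, (y :: Q), s2; rewrite /= (negbTE npy).
Qed.

Lemma uadj_sym (T : finType) (e : rel T) : symmetric (uadj e).
Proof. by move=> u v; rewrite /uadj eq_sym orbC. Qed.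

Lemma path_uadj (T : finType) (e : rel T) x p :
  path e x p -> uniq (x :: p) -> path (uadj e) x p.
Proof.
elim: p x => [|y p IH] x //= /andP[exy pp] /andP[xNyp up].
rewrite IH // andbT /uadj exy andbT; apply: contraNneq xNyp => ->; exact: mem_head.
Qed.

Definition segment_ends (T : Type) (seg : T * seq T) : T * T * T :=
  (seg.1, head seg.1 seg.2, last seg.1 seg.2).

Section ForestPaths.

Variables (T : eqType) (r : rel T) (a : pred T).
Hypothesis r_sym : symmetric r.
Hypothesis acyclic : forall c, 3 <= size c -> all a c -> ~~ ucycleb r c.

Lemma ucycle_join x z P Q :
  path r x (rcons P z) -> path r x (rcons Q z) -> uniq (x :: z :: P ++ Q) ->
  ucycleb r (x :: P ++ z :: rev Q).
Proof.
move=> pP pQ uxzPQ; apply/andP; split; last first.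
  rewrite -(perm_uniq (_ : perm_eq (x :: z :: P ++ Q) _)) //.
  by rewrite perm_cons -cat1s perm_catCA perm_cat2l /= perm_cons perm_sym perm_rev.
have pQrev : path r z (rcons (rev Q) x).
  move: pQ; rewrite (eq_path (e' := fun u v => r v u)); last by move=> u v; rewrite r_sym.
  by rewrite -rev_path last_rcons belast_rcons rev_cons.
by rewrite /= rcons_cat rcons_cons cat_path /= pQrev andbT -rcons_path.
Qed.

Lemma forest_paths_meet_head x A B :
  uniq (x :: A) -> uniq (x :: B) -> path r x A -> path r x B ->
  all a (x :: A) -> all a (x :: B) -> has (mem A) B -> head x A = head x B.
Proof.
(* With z the first vertex of B lying on A, the branches x..z of A and B close
   a cycle, unless both are the single edge xz. *)
move=> uA uB pA pB aA aB /has_split_first[z [Q [B2 [defB zA QA]]]].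
have [P [A2 defA]] : exists P A2, A = P ++ z :: A2 by case/splitPr: zA => P A2; exists P, A2.
subst A B; have [PQ0|PQ] := eqVneq (P ++ Q) [::].
  by case: P Q PQ0 {uA pA aA QA uB pB aB zA} => [|? ?] [|? ?].
have uxzPQ : uniq (x :: z :: P ++ Q).
  have QP : ~~ has (mem P) Q.
    by apply: contra QA; apply: sub_has => y; rewrite !inE mem_cat => ->.
  move: uA uB; rewrite /= !cat_uniq /= !(mem_cat, inE) !negb_or.
  move=> /and5P[/and3P[-> -> _] -> /andP[-> _] _ _] /and5P[/and3P[-> _ _] -> /andP[-> _] _ _].
  by rewrite QP.
have size_c : 3 <= size (x :: P ++ z :: rev Q).
  by rewrite /= size_cat /= size_rev addnS !ltnS -size_cat lt0n size_eq0.
have all_c : all a (x :: P ++ z :: rev Q).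
  by move: aA aB; rewrite /= !all_cat /= all_rev => /and3P[-> -> /andP[-> _]] /and3P[_ -> _].
case/negP: (acyclic size_c all_c); apply: ucycle_join uxzPQ.
- by move: pA; rewrite -cat_rcons cat_path => /andP[].
- by move: pB; rewrite -cat_rcons cat_path => /andP[].
Qed.

Lemma forest_path_unique x A B :
  uniq (x :: A) -> uniq (x :: B) -> path r x A -> path r x B ->
  all a (x :: A) -> all a (x :: B) -> last x A = last x B -> A = B.
Proof.
elim: A x B => [|y A IH] x [|y' B] //= uA uB pA pB aA aB lAB.
- by move: uB; rewrite {1}lAB mem_last.
- by move: uA; rewrite -{1}lAB mem_last.
have yy' : y = y'.
  apply: (forest_paths_meet_head uA uB pA pB aA aB); apply/hasP.
  by exists (last y' B); [exact: mem_last | rewrite -lAB; exact: mem_last].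
subst y'; congr (_ :: _).
move: uA uB pA pB aA aB => /andP[_ ?] /andP[_ ?] /andP[_ ?] /andP[_ ?] /andP[_ ?] /andP[_ ?].
exact: (IH y).
Qed.

Definition forest_segment (seg : T * seq T) : bool :=
  [&& uniq (seg.1 :: seg.2), path r seg.1 seg.2 & all a seg.2].

Lemma segment_ends_inj : {in forest_segment &, injective (@segment_ends T)}.
Proof.
move=> [y B] [y' B'] /and3P[/= uB pB aB] /and3P[/= uB' pB' aB'] [yy' hBB' lBB'].
subst y'; congr (_, _); move: uB uB' pB pB' aB aB' hBB' lBB'.
case: B B' => [|b B] [|b' B'] //=.
- by move=> _ /andP[yB' _] _ _ _ _ yb'; rewrite yb' mem_head in yB'.
- by move=> /andP[yB _] _ _ _ _ _ by'; rewrite by' mem_head in yB.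
move=> /andP[_ uB] /andP[_ uB'] /andP[_ pB] /andP[_ pB'] aB aB' bb'; subst b'.
by move=> lBB'; congr (_ :: _); apply: (forest_path_unique uB uB').
Qed.

End ForestPaths.

Section Segments.

Variables (T : finType) (S : {set T}).

(* segments x A p cuts the walk x :: A ++ p before each vertex of S; A is the
   part of the current segment already read. *)
Fixpoint segments (x : T) (A p : seq T) : seq (T * seq T) :=
  if p is v :: p' then
    if v \in S then (x, A) :: segments v [::] p' else segments x (rcons A v) p'
  else [:: (x, A)].

Lemma flatten_segments x A p :
  flatten [seq seg.1 :: seg.2 | seg <- segments x A p] = x :: A ++ p.
Proof.
elim: p x A => [|v p IH] x A /=; first by rewrite !cats0.
by case: ifP => _; rewrite ?map_cons /= IH ?cat_rcons.
Qed.

Lemma size_segments x A p : size (segments x A p) = (count [in S] p).+1.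
Proof. by elim: p x A => [|v p IH] x A //=; case: ifP => _ /=; rewrite IH. Qed.

Lemma segments_forest (r : rel T) x A p :
  uniq (x :: A ++ p) -> path r x (A ++ p) -> all (fun v => v \notin S) A ->
  all (forest_segment r (fun v => v \notin S)) (segments x A p).
Proof.
elim: p x A => [|v p IH] x A uxAp pxAp aA.
  by rewrite cats0 in uxAp pxAp; rewrite /= /forest_segment uxAp pxAp aA.
rewrite /=; case: ifP => vS; last by rewrite IH ?cat_rcons ?all_rcons ?vS.
move: uxAp pxAp; rewrite -(cat_cons x) cat_uniq cat_path.
move=> /and3P[uxA _ uvp] /andP[pxA /andP[_ pvp]].
by rewrite /= {1}/forest_segment uxA pxA aA IH.
Qed.

End Segments.

Definition path_signature (T : finType) (S : {set T}) (x : T) (p : seq T) :=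
  map (@segment_ends T) (segments S x [::] p).

Lemma path_signature_inj (T : finType) (e : rel T) (S : {set T}) x :
  is_fvs e S ->
  {in [pred p | uniq (x :: p) && path (uadj e) x p] &, injective (path_signature S x)}.
Proof.
move=> fvsS p q /andP[up pp] /andP[uq pq] eq_sig.
have : segments S x [::] p = segments S x [::] q.
  apply: (inj_in_map (segment_ends_inj (@uadj_sym T e) fvsS)) eq_sig.
  - exact: (segments_forest (A := [::]) up pp isT).
  - exact: (segments_forest (A := [::]) uq pq isT).
move/(congr1 (fun L => flatten [seq seg.1 :: seg.2 | seg <- L])).
by rewrite !flatten_segments => -[].
Qed.

Lemma size_path_signature (T : finType) (S : {set T}) x p :
  uniq p -> size (path_signature S x p) <= #|S|.+1.
Proof.
move=> up; rewrite size_map size_segments ltnS -size_filter.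
move/card_uniqP: (filter_uniq [in S] up) => <-.
by apply/subset_leq_card/subsetP => v; rewrite mem_filter => /andP[].
Qed.

Lemma is_fvs_set0 (T : finType) (e : rel T) : #|T| <= 2 -> is_fvs e set0.
Proof.
move=> T2 c c3 _; apply/negP => /andP[_ /card_uniqP cc].
by move: (max_card (mem c)); rewrite cc => /leq_trans/(_ T2); rewrite leqNgt c3.
Qed.

Lemma size_st_paths_forest (T : finType) (e : rel T) s t ps :
  is_fvs e set0 -> uniq ps -> all (st_path e s t) ps -> size ps <= 1.
Proof.
move=> fvs0 ups /allP aps; case: ps ups aps => [//|p ps] ups aps.
apply: (leq_trans (uniq_leq_size (s2 := [:: p]) ups _)) => // q qps.
have [/and3P[pq /eqP lq uq] /and3P[pp /eqP lp up]] := (aps q qps, aps p (mem_head _ _)).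
have avoid0 (r : seq T) : all (fun v => v \notin set0) r by apply/allP => v _; rewrite in_set0.
rewrite inE; apply/eqP/(forest_path_unique (@uadj_sym T e) fvs0 uq up
  (path_uadj pq uq) (path_uadj pp up) (avoid0 _) (avoid0 _)).
by rewrite lq lp.
Qed.

Lemma size_uniq_short_seqs (X : finType) m (L : seq (seq X)) :
  uniq L -> all (fun s => size s <= m) L -> size L <= #|X|.+1 ^ m.
Proof.
move=> uL /allP shortL.
pose pad (s : seq X) := map Some s ++ nseq (m - size s) None.
have padK : cancel pad (pmap id).
  move=> s; rewrite /pad pmap_cat (map_pK (g := Some) (f := id)) //.
  by elim: (m - size s) => [|n IH]; rewrite ?cats0.
rewrite -(size_map pad) -card_option -card_tuple cardE -(size_map val).
apply: uniq_leq_size; first by rewrite map_inj_uniq //; exact: can_inj padK.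
move=> _ /mapP[s /shortL sm ->].
have sz : size (pad s) == m by rewrite size_cat size_map size_nseq subnKC.
by apply/mapP; exists (Tuple sz); first exact: mem_enum.
Qed.

Lemma size_st_paths (T : finType) (e : rel T) (S : {set T}) s t ps :
  is_fvs e S -> uniq ps -> all (st_path e s t) ps -> size ps <= (#|T| ^ 3).+1 ^ #|S|.+1.
Proof.
move=> fvsS ups /allP aps.
have simple p : p \in ps -> uniq (s :: p) && path (uadj e) s p.
  by case/aps/and3P => pp _ up; rewrite up path_uadj.
rewrite -(size_map (path_signature S s)) (_ : #|T| ^ 3 = #|{: T * T * T}|); last first.
  by rewrite !card_prod !expnS expn0 muln1 mulnA.
apply: size_uniq_short_seqs.
  rewrite map_inj_in_uniq // => p q /simple sp /simple sq.
  exact: path_signature_inj fvsS _ _ sp sq.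
apply/allP => _ /mapP[p /simple /andP[/andP[_ up] _] ->]; exact: size_path_signature.
Qed.

Lemma cube_succ_exp_le n k :
  2 <= n -> 0 < k -> (n ^ 3).+1 ^ k.+1 <= k ^ k * n ^ (8 * k).
Proof.
move=> n2 k0.
have n3S_le_n4 : (n ^ 3).+1 <= n ^ 4 by rewrite [n ^ 4]expnS; nia.
apply: (@leq_trans ((n ^ 4) ^ k.+1)); first by rewrite leq_exp2r.
rewrite -expnM; apply: (@leq_trans (n ^ (8 * k))); first by apply: leq_pexp2l; lia.
by rewrite leq_pmull // expn_gt0 k0.
Qed.

Theorem lemma2 :
  exists c : nat,
    forall (T : finType) (e : rel T) (s t : T) (k : nat),
      dag e -> fvs_is e k ->
      forall ps : seq (seq T),
        uniq ps -> all (st_path e s t) ps ->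
        size ps <= k ^ k * #|T| ^ (c * k).
Proof.
exists 8 => T e s t k _ [[S fvsS cardS] minS] ps ups aps.
have [k0|k_gt0] := posnP k.
  have S0 : S = set0 by apply/eqP; rewrite -cards_eq0 cardS k0.
  by rewrite k0 muln0 !expn0; apply: size_st_paths_forest ups aps; rewrite -S0.
have n_gt2 : 2 < #|T|.
  by rewrite ltnNge; apply/negP => /(is_fvs_set0 e)/minS; rewrite cards0 leqNgt k_gt0.
apply: leq_trans (size_st_paths fvsS ups aps) _.
by rewrite cardS cube_succ_exp_le // ltnW.
Qed.
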